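(* Let $\{v_1,\dots,v_n\}$ be a basis of $\mathbb{C}^n$ and $m_1,\dots,m_n\in\mathbb{R}_+$, and let $\Psi(z)=\max_{1\le j\le n} m_j\log|z\cdot\bar v_j|$ for $z\in\mathbb{D}^n$. Then there exists an orthonormal basis $\{\tilde v_1,\dots,\tilde v_n\}$ of $\mathbb{C}^n$ such that the function $\tilde\Psi(z):=\max_{1\le j\le n} m_j\log|z\cdot\overline{\tilde v_j}|$ satisfies $\tilde\Psi-\Psi\in L^\infty(\mathbb{D}^n)$.
   Context: $\mathbb{D}$ is the unit disk in $\mathbb{C}$. For $z,w\in\mathbb{C}^n$, $z\cdot\bar w=\sum_j z_j\bar w_j$ is the standard Hermitian product. *)

From HB Require Import structures.
From mathcomp Require Import all_boot all_order all_algebra.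
From mathcomp Require Import complex.
From mathcomp Require Import boolp reals ereal exp.
Set Implicit Arguments. Unset Strict Implicit. Unset Printing Implicit Defensive.
Import Order.TTheory GRing.Theory Num.Theory.
Local Open Scope ring_scope.
Local Open Scope complex_scope.

Section Defs.
Variable R : realType.

Definition hprod (n : nat) (z w : 'rV[R[i]]_n) : R[i] :=
  \sum_(k < n) z 0 k * (w 0 k)^*.

Definition polydisc (n : nat) (z : 'rV[R[i]]_n) : Prop :=
  forall k : 'I_n, `|z 0 k| < 1.

(* log of a nonnegative real, with value -oo at 0; applied to Re `|w| = |w| *)
Definition elog (x : R) : \bar R :=
  if x == 0 then -oo%E else (ln x)%:E.

Definition maxlog (n : nat) (m : 'I_n -> R) (V : 'M[R[i]]_n)
  (z : 'rV[R[i]]_n) : \bar R :=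
  (\big[Order.max/-oo]_(j < n) ((m j)%:E * elog (complex.Re `|hprod z (row j V)|%R)))%E.

Definition orthonormal_rows (n : nat) (W : 'M[R[i]]_n) : Prop :=
  forall i j : 'I_n, hprod (row i W) (row j W) = (i == j)%:R.
End Defs.

From HB Require Import structures.
From mathcomp Require Import all_boot all_order all_algebra.
From mathcomp Require Import fingroup perm spectral complex.
From mathcomp Require Import boolp reals ereal exp lra.
Set Implicit Arguments. Unset Strict Implicit. Unset Printing Implicit Defensive.
Import Order.TTheory GRing.Theory Num.Theory.
Local Open Scope ring_scope.

(* Sort the basis by increasing weight and orthonormalize it by Gram-Schmidt:
   then V = B W where row k of B only involves rows j with m j <= m k, and
   B^-1, which is a polynomial in B, has the same shape.  On the polydisc the
   |z.v_j| are bounded above, so if w = sum_j b_j v_j with m j <= m k, then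
   m k log|z.w| <= m j log|z.v_j| + const for the j with b_j <> 0 maximizing
   |z.v_j|.  Hence each max-log function is bounded by the other plus a
   constant. *)

Section WeightLower.
Variables (F : fieldType) (d : Order.disp_t) (T : porderType d).

Section Closure.
Variables (n : nat) (m : 'I_n -> T).

Definition weight_lower (B : 'M[F]_n) := forall i j, B i j != 0 -> (m j <= m i)%O.

Lemma weight_lowerD A B : weight_lower A -> weight_lower B -> weight_lower (A + B).
Proof.
move=> lA lB i j; rewrite mxE.
by have [Aij0|/lA//] := eqVneq (A i j) 0; rewrite Aij0 add0r => /lB.
Qed.

Lemma weight_lowerM A B : weight_lower A -> weight_lower B -> weight_lower (A *m B).
Proof.
move=> lA lB i j; rewrite mxE => ABij.
have /existsP[k] : [exists k, A i k * B k j != 0].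
  by apply: contraNT ABij => /existsPn AB0; apply/eqP/big1 => k _; apply/eqP/negbNE.
by rewrite mulf_eq0 negb_or => /andP[/lA mki /lB mjk]; apply: le_trans mki.
Qed.

Lemma weight_lower_scalar a : weight_lower a%:M.
Proof.
by move=> i j; rewrite mxE; case: (eqVneq i j) => [->|_]; rewrite ?lexx ?mulr0n ?eqxx.
Qed.

Lemma weight_lowerZ a B : weight_lower B -> weight_lower (a *: B).
Proof. by move=> lB i j; rewrite mxE mulf_eq0 negb_or => /andP[_ /lB]. Qed.

End Closure.

Variables (n : nat) (m : 'I_n.+1 -> T).

Lemma weight_lower_horner B p : weight_lower m B -> weight_lower m (horner_mx B p).
Proof.
move=> lB; elim/poly_ind: p => [|p a lp].
  by rewrite rmorph0 => i j; rewrite mxE eqxx.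
rewrite rmorphD rmorphM /= horner_mx_X horner_mx_C -mulmxE.
by apply: weight_lowerD; [exact: weight_lowerM | exact: weight_lower_scalar].
Qed.

Lemma weight_lower_inv B : B \in unitmx -> weight_lower m B -> weight_lower m (invmx B).
Proof.
move=> Bu lB; set p := char_poly B.
(* By Cayley-Hamilton, [invmx B] is a polynomial in [B]. *)
have p0_neq0 : p`_0 != 0.
  by rewrite char_poly_det mulf_eq0 signr_eq0 -unitfE -unitmxE.
have := poly_take_drop 1 p.
rewrite (size1_polyC (size_take_poly _ _)) coef_take_poly /= expr1 => p_split.
have : horner_mx B p = 0 := Cayley_Hamilton B.
rewrite -p_split rmorphD rmorphM /= horner_mx_C horner_mx_X -mulmxE.
move/eqP; rewrite addrC addr_eq0 => /eqP q_B.
have -> : invmx B = - (p`_0)^-1 *: horner_mx B (drop_poly 1 p).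
  apply: (@row_free_inj _ _ _ _ B); first by rewrite row_free_unit.
  rewrite /= mulVmx // -scalemxAl q_B.
  by rewrite scaleNr scalerN opprK scale_scalar_mx mulVf.
by apply: weight_lowerZ; apply: weight_lower_horner.
Qed.
End WeightLower.

Lemma exists_sorting_perm d (T : orderType d) n (m : 'I_n -> T) :
  exists s : 'S_n, forall k l : 'I_n, (k <= l)%N -> (m (s k) <= m (s l))%O.
Proof.
pose r i j := (m i <= m j)%O.
pose t := sort_tuple r (ord_tuple n).
have t_sorted : sorted r t by apply: sort_sorted => i j; exact: le_total.
have t_inj : injective (tnth t).
  move=> k l; rewrite (tnth_nth k) (tnth_nth k) => /eqP.
  by rewrite nth_uniq ?size_tuple ?sort_uniq ?enum_uniq // => /eqP/val_inj.
exists (perm t_inj) => k l kl; rewrite !permE (tnth_nth k) (tnth_nth k).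
apply: (sorted_leq_nth (leT := r)) => //; rewrite ?inE ?size_tuple //.
- by move=> ? ? ?; exact: le_trans.
- by move=> ?; exact: lexx.
Qed.

Lemma schmidt_trig_factor (C : numClosedFieldType) n (A : 'M[C]_n) :
  exists2 L : 'M[C]_n, is_trig_mx L & A = L *m schmidt A.
Proof.
set S := schmidt A.
have row_comb i : exists c : 'I_n -> C,
    row i A = \sum_(k < n | (k <= i)%N) c k *: row k S.
  have /sub_sumsmxP[u ->] := row_schmidt_sub A i.
  have coef k : exists c, (u k *m <<row k S>>)%MS = c *: row k S.
    have : (u k *m <<row k S>> <= <<row k S>>)%MS := submxMl _ _.
    rewrite genmxE => /submxP[D ->].
    by exists (D 0 0); rewrite {1}[D]mx11_scalar mul_scalar_mx.
  have [c cP] := fin_all_exists coef.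
  by exists c; apply: eq_bigr => k _; exact: cP.
have [c cP] := fin_all_exists row_comb.
exists (\matrix_(i, k) if (k <= i)%N then c i k else 0).
  by apply/is_trig_mxP => i k ik; rewrite mxE leqNgt ik.
apply/row_matrixP => i; rewrite row_mul mulmx_sum_row cP big_mkcond /=.
by apply: eq_bigr => k _; rewrite !mxE; case: ifP; rewrite ?scale0r.
Qed.

Lemma row_perm_unitarymx (C : numClosedFieldType) n (s : 'S_n) (A : 'M[C]_n) :
  A \is unitarymx -> row_perm s A \is unitarymx.
Proof.
move=> /row_unitarymxP A_orth; apply/row_unitarymxP => i j.
have rowE k : row k (row_perm s A) = row (s k) A by apply/rowP => l; rewrite !mxE.
by rewrite !rowE A_orth (inj_eq perm_inj).
Qed.

Lemma exists_unitary_weight_lower_factor (C : numClosedFieldType) d (T : orderType d)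
    n (m : 'I_n -> T) (V : 'M[C]_n) :
  exists2 W : 'M[C]_n, W \is unitarymx & exists2 B, weight_lower m B & V = B *m W.
Proof.
have [s s_sorted] := exists_sorting_perm m.
have [L /is_trig_mxP L_trig VsE] := schmidt_trig_factor (row_perm s V).
exists (row_perm s^-1 (schmidt (row_perm s V))).
  by apply/row_perm_unitarymx/schmidt_unitarymx.
exists (row_perm s^-1 (col_perm s^-1 L)).
  move=> i j; rewrite !mxE; apply: contraNT; rewrite -ltNge => lt_ij.
  apply/eqP/L_trig; rewrite ltnNge.
  by apply: contraL lt_ij => /s_sorted; rewrite !permKV -leNgt.
move: VsE; set S := schmidt _ => VsE.
rewrite !row_permE col_permE invgK !mulmxA -(mulmxA _ (perm_mx s)) -perm_mxM mulgV.
by rewrite perm_mx1 mulmx1 -mulmxA -VsE row_permE mulmxA -perm_mxM mulVg perm_mx1 mul1mx.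
Qed.

Local Open Scope complex_scope.

Section ComplexModulus.
Variable R : rcfType.

Definition absc (z : R[i]) : R := complex.Re `|z|.

Lemma abscE (z : R[i]) : `|z| = (absc z)%:C.
Proof. by rewrite /absc normc_def. Qed.

Lemma absc_ge0 (z : R[i]) : 0 <= absc z.
Proof. by rewrite -ler0c -abscE. Qed.

Lemma absc_eq0 (z : R[i]) : (absc z == 0) = (z == 0).
Proof. by rewrite -(inj_eq (@complexI R)) -abscE normr_eq0. Qed.

Lemma absc0 : absc 0 = 0.
Proof. by apply/eqP; rewrite absc_eq0. Qed.

Lemma abscM (z w : R[i]) : absc (z * w) = absc z * absc w.
Proof. by apply: (@complexI R); rewrite -abscE normrM !abscE rmorphM. Qed.

Lemma abscJ (z : R[i]) : absc z^* = absc z.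
Proof. by apply: (@complexI R); rewrite -!abscE normcJ. Qed.

Lemma absc_sum (I : finType) (F : I -> R[i]) :
  absc (\sum_i F i) <= \sum_i absc (F i).
Proof.
rewrite -(@lecR R) -abscE rmorph_sum; apply: le_trans (ler_norm_sum _ _ _) _.
by under eq_bigr do rewrite abscE.
Qed.

Lemma exists_dominant_term (I : finType) (b h : I -> R[i]) :
    \sum_i (b i)^* * h i != 0 ->
  exists2 j, b j != 0 &
    absc (\sum_i (b i)^* * h i) <= (\sum_i absc (b i)) * absc (h j).
Proof.
move=> sum_neq0.
have [i0 bi0] : exists i0, b i0 != 0.
  apply/existsP; apply: contraNT sum_neq0 => /existsPn b0.
  by apply/eqP/big1 => i _; rewrite (eqP (negbNE (b0 i))) rmorph0 mul0r.
have [j bj j_max] := @arg_maxP _ _ _ i0 (fun i => b i != 0) (absc \o h) bi0.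
exists j => //; rewrite mulr_suml; apply: le_trans (absc_sum _) _.
apply: ler_sum => i _; rewrite abscM abscJ.
have [->|/j_max] := eqVneq (b i) 0; first by rewrite !(mul0r, absc0).
by apply: ler_wpM2l; exact: absc_ge0.
Qed.

End ComplexModulus.

Section HermitianProduct.
Variables (R : realType) (n : nat).
Local Open Scope sesquilinear_scope.

Lemma hprod_rowE p (z : 'rV[R[i]]_n) (W : 'M[R[i]]_(p, n)) k :
  hprod z (row k W) = (z *m W^t*) 0 k.
Proof. by rewrite /hprod !mxE; apply: eq_bigr => l _; rewrite !mxE. Qed.

Lemma hprod_row_mulmx (z : 'rV[R[i]]_n) (B V : 'M[R[i]]_n) k :
  hprod z (row k (B *m V)) = \sum_j (B k j)^* * hprod z (row j V).
Proof.
rewrite hprod_rowE trmx_mul map_mxM mulmxA mxE.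
by apply: eq_bigr => j _; rewrite mulrC hprod_rowE !mxE.
Qed.

Lemma unitarymx_orthonormal_rows (W : 'M[R[i]]_n) :
  W \is unitarymx -> orthonormal_rows W.
Proof. by move=> /unitarymxP WWt i j; rewrite hprod_rowE -row_mul WWt !mxE. Qed.

Lemma unitarymx_hprod_row_neq0 (W : 'M[R[i]]_n) (z : 'rV[R[i]]_n) :
  W \is unitarymx -> z != 0 -> exists k, hprod z (row k W) != 0.
Proof.
move=> W_unitary z_neq0.
have Wt_free : row_free (W^t*) by rewrite /row_free mxrank_unitary ?trmxC_unitary.
have /existsP[k] : [exists k, (z *m W^t*) 0 k != 0].
  apply: contraNT z_neq0 => /existsPn zWt0.
  rewrite -(mulmx_free_eq0 _ Wt_free); apply/eqP/rowP => k.
  by rewrite [RHS]mxE; apply/eqP/negbNE.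
by exists k; rewrite hprod_rowE.
Qed.

Lemma absc_hprod_le (z v : 'rV[R[i]]_n) :
  polydisc z -> absc (hprod z v) <= \sum_l absc (v 0 l).
Proof.
move=> z_D; apply: le_trans (absc_sum _) _; apply: ler_sum => l _.
rewrite abscM abscJ ler_piMl ?absc_ge0 //.
by rewrite -(@lecR R) -abscE; apply: ltW; exact: z_D.
Qed.

End HermitianProduct.

Section MaxLog.
Variables (R : realType) (n : nat) (m : 'I_n -> R).
Hypothesis m_gt0 : forall j, 0 < m j.

Lemma elog0 : elog (0 : R) = -oo%E.
Proof. by rewrite /elog eqxx. Qed.

Lemma elog_gt0 (x : R) : 0 < x -> elog x = (ln x)%:E.
Proof. by move=> x_gt0; rewrite /elog gt_eqF. Qed.

Lemma le_maxlog (V : 'M[R[i]]_n) z j :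
  ((m j)%:E * elog (absc (hprod z (row j V))) <= maxlog m V z)%E.
Proof. by rewrite /maxlog (bigD1 j) //= le_max lexx. Qed.

Lemma maxlog_le (V : 'M[R[i]]_n) z (c : \bar R) :
    (forall j, (m j)%:E * elog (absc (hprod z (row j V))) <= c)%E ->
  (maxlog m V z <= c)%E.
Proof.
move=> le_c; apply: (big_ind (fun x => x <= c)%E) => //; first exact: leNye.
by move=> x y xc yc; rewrite ge_max xc yc.
Qed.

Lemma maxlog_lt_pinfty (V : 'M[R[i]]_n) z : (maxlog m V z < +oo)%E.
Proof.
apply: (big_ind (fun x => x < +oo)%E) => // [x y xoo yoo|j _].
  by rewrite gt_max xoo.
apply: lte_mul_pinfty; rewrite ?lee_fin ?ltW //.
by rewrite /elog; case: ifP => _; rewrite ?ltry.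
Qed.

Lemma maxlog_fin_num (W : 'M[R[i]]_n) z :
  W \is unitarymx -> z != 0 -> maxlog m W z \is a fin_num.
Proof.
move=> W_unitary /(unitarymx_hprod_row_neq0 W_unitary)[k hk_neq0].
rewrite fin_numElt maxlog_lt_pinfty andbT; apply: lt_le_trans (le_maxlog W z k).
by rewrite elog_gt0 ?ltNyr // lt0r absc_eq0 hk_neq0 absc_ge0.
Qed.

Lemma ln_absc_hprod_row_le (V : 'M[R[i]]_n) z j :
    polydisc z -> 0 < absc (hprod z (row j V)) ->
  ln (absc (hprod z (row j V))) <= ln (1 + \sum_i \sum_l absc (V i l)).
Proof.
move=> z_D h_gt0.
have S_ge0 i : 0 <= \sum_l absc (V i l) by apply: sumr_ge0 => l _; exact: absc_ge0.
have S_gt0 : 0 < 1 + \sum_i \sum_l absc (V i l) by rewrite ltr_wpDr ?sumr_ge0.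
rewrite ler_ln ?posrE //; apply: le_trans (absc_hprod_le _ z_D) _.
under eq_bigr do rewrite mxE.
by rewrite [X in _ <= 1 + X](bigD1 j) //= addrCA lerDl addr_ge0 ?sumr_ge0.
Qed.

Lemma maxlog_row_mulmx_le (B V : 'M[R[i]]_n) k : weight_lower m B ->
  exists C, forall z, polydisc z ->
    ((m k)%:E * elog (absc (hprod z (row k (B *m V)))) <= maxlog m V z + C%:E)%E.
Proof.
move=> B_lower.
pose K := \sum_j absc (B k j).
pose D := ln (1 + \sum_i \sum_l absc (V i l)).
exists (m k * (ln K + D)) => z z_D.
have [hk0|hk_neq0] := eqVneq (hprod z (row k (B *m V))) 0.
  by rewrite hk0 absc0 elog0 gt0_muleNy ?lte_fin ?leNye.
have := hk_neq0; rewrite hprod_row_mulmx => /exists_dominant_term[j Bkj_neq0].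
rewrite -hprod_row_mulmx -/K; set hk := absc _; set hj := absc _ => hk_le.
have hk_gt0 : 0 < hk by rewrite lt0r absc_eq0 hk_neq0 absc_ge0.
have K_ge0 : 0 <= K by apply: sumr_ge0 => i _; exact: absc_ge0.
have [K_gt0 hj_gt0] : 0 < K /\ 0 < hj.
  have hj_ge0 : 0 <= hj := absc_ge0 _.
  by split; nra.
have ln_hk : ln hk <= ln K + ln hj by rewrite -lnM ?posrE // ler_ln ?posrE ?mulr_gt0.
have ln_hj : ln hj <= D := ln_absc_hprod_row_le z_D hj_gt0.
have D_ge0 : 0 <= D.
  by apply: ln_ge0; rewrite lerDl; do 2!(apply: sumr_ge0 => ? _); exact: absc_ge0.
have mjk : m j <= m k := B_lower _ _ Bkj_neq0.
(* Since [m j <= m k] and [ln hj <= D], lowering the weight from [m k] to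
   [m j] costs at most [m k * D]. *)
apply: (@le_trans _ _ ((m j * ln hj) + m k * (ln K + D))%:E).
  by rewrite elog_gt0 // -EFinM lee_fin; have := m_gt0 j; have := m_gt0 k; nra.
by rewrite EFinD leeD2r // EFinM -elog_gt0 //; exact: le_maxlog.
Qed.

Lemma maxlog_mulmx_le (B V : 'M[R[i]]_n) : weight_lower m B ->
  exists C, forall z, polydisc z -> (maxlog m (B *m V) z <= maxlog m V z + C%:E)%E.
Proof.
move=> B_lower.
have /fin_all_exists[C C_bound] := fun k => maxlog_row_mulmx_le V k B_lower.
exists (\sum_k `|C k|) => z z_D; apply: maxlog_le => k.
apply: le_trans (C_bound k z z_D) _; apply: leeD2l; rewrite lee_fin.
by apply: le_trans (ler_norm _) _; rewrite (bigD1 k) //= lerDl sumr_ge0.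
Qed.

End MaxLog.

Lemma abse_subr_le_max (R : realDomainType) (x y : \bar R) (c1 c2 : R) :
    x \is a fin_num -> (x <= y + c1%:E)%E -> (y <= x + c2%:E)%E ->
  (`|x - y| <= (Num.max c1 c2)%:E)%E.
Proof.
move=> /fineK <-; case: y => [y| |] //=.
rewrite -!EFinD !lee_fin ler_norml => xy yx.
have c1_le : c1 <= Num.max c1 c2 by rewrite le_max lexx.
have c2_le : c2 <= Num.max c1 c2 by rewrite le_max lexx orbT.
by apply/andP; split; lra.
Qed.

Theorem lemma2p4 (R : realType) (n : nat) (V : 'M[R[i]]_n) (m : 'I_n -> R) :
  row_free V -> (forall j, 0 < m j) ->
  exists W : 'M[R[i]]_n,
    orthonormal_rows W /\
    exists C : R, forall z : 'rV[R[i]]_n, polydisc z -> z != 0 ->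
      (`| maxlog m W z - maxlog m V z | <= C%:E)%E.
Proof.
case: n V m => [|n] V m V_free m_gt0.
  exists V; split; first by case.
  by exists 0 => z _ /negP[]; apply/eqP/matrixP => ? [].
have [W W_unitary [B B_lower VE]] := exists_unitary_weight_lower_factor m V.
have W_free : row_free W by rewrite /row_free mxrank_unitary.
have B_unit : B \in unitmx.
  by rewrite -row_free_unit /row_free -(mxrankMfree _ W_free) -VE.
have WE : W = invmx B *m V by rewrite VE mulKmx.
have [C1 WV_le] := maxlog_mulmx_le m_gt0 V (weight_lower_inv B_unit B_lower).
have [C2 VW_le] := maxlog_mulmx_le m_gt0 W B_lower.
exists W; split; first exact: unitarymx_orthonormal_rows.
exists (Num.max C1 C2) => z z_D z_neq0.
apply: abse_subr_le_max; first exact: maxlog_fin_num.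
  by rewrite {1}WE; exact: WV_le.
by rewrite {1}VE; exact: VW_le.
Qed.
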